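(* Let $n\ge 2$ and let $P=[p_1,\ldots,p_n]\neq[n,n-1,\ldots,1]$ be an arithmetically progressed permutation with ratio $k$ such that $p_1\in\{1,k+1,n\}$. Then there exists a string $\mathsf{T}$ of length $n$ over the binary alphabet $\{\mathtt{a},\mathtt{b}\}$ ($\mathtt{a}<\mathtt{b}$) with $\mathsf{SA}_{\mathsf{T}}=P$.
   Context: Lexicographic order with a proper prefix smaller than the longer string; suffix array $\mathsf{SA}_{\mathsf{T}}$: permutation of $[1..n]$ such that $\mathsf{T}[\mathsf{SA}_{\mathsf{T}}[i]..n]$ is the $i$-th smallest suffix. $x\bmod n$ denotes the representative of $x$ modulo $n$ in $[1..n]$. An arithmetically progressed permutation of length $n$ with ratio $k\in[1..n-1]$ is a permutation $P=[p_1,\ldots,p_n]$ of $[1..n]$ with $p_{i+1}=p_i+k\bmod n$. *)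

From mathcomp Require Import all_boot.
Set Implicit Arguments. Unset Strict Implicit. Unset Printing Implicit Defensive.

(* Strings over {a,b} are seq bool with a := false, b := true (so a < b). *)

Fixpoint lex_lt (s t : seq bool) : bool :=
  match s, t with
  | [::], [::] => false
  | [::], _ :: _ => true
  | _ :: _, [::] => false
  | x :: s', y :: t' => (x < y) || ((x == y) && lex_lt s' t')
  end.

(* x mod n with representative in [1..n] (for n >= 1) *)
Definition modn1 (x n : nat) : nat := ((x + n - 1) %% n).+1.

(* the suffix T[i..n] (1-based) *)
Definition suffix (T : seq bool) (i : nat) : seq bool := drop i.-1 T.

Definition is_suffix_array (T : seq bool) (P : seq nat) : Prop :=
  perm_eq P (iota 1 (size T)) /\
  forall i, i.+1 < size P ->
    lex_lt (suffix T (nth 0 P i)) (suffix T (nth 0 P i.+1)).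

Definition ap_perm (n k : nat) (P : seq nat) : Prop :=
  [/\ size P = n, perm_eq P (iota 1 n), 1 <= k <= n.-1 &
      forall i, i.+1 < n -> nth 0 P i.+1 = modn1 (nth 0 P i + k) n].

From mathcomp Require Import all_boot zify.

Set Implicit Arguments.
Unset Strict Implicit.
Unset Printing Implicit Defensive.

(* Index suffixes by their (0-based) starting position and by their rank.
   For an arithmetically progressed permutation P with ratio k and first entry
   c + 1, the suffix of rank r starts at position pos r = (c + r k) mod n.
   Since P is a permutation, pos is a bijection on [0, n); moving a position
   one step to the right moves its rank by a fixed amount shift (mod n),
   except for the last position, whose successor is the empty suffix.

   The theorem follows. *)

(* The order conditions on a rank assignment with letters [L], successor
   ranks [s] and last rank [z] that force the suffixes to be sorted by rank. *)
Definition rank_compatible (n : nat) (L : nat -> bool) (s : nat -> nat) (z : nat) :=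
  forall x y, x < y -> y < n ->
    (L x < L y) \/ (L x = L y /\ (x = z \/ (y <> z /\ s x < s y))).

Section SuffixOrderFromRanks.

Variables (n z : nat) (T : seq bool) (Q s : nat -> nat) (L : nat -> bool).
Hypothesis T_size : size T = n.
Hypothesis Q_lt : forall r, r < n -> Q r < n.
Hypothesis Q_inj : forall r1 r2, r1 < n -> r2 < n -> Q r1 = Q r2 -> r1 = r2.
Hypothesis T_Q : forall r, r < n -> nth false T (Q r) = L r.
Hypothesis s_lt : forall r, r < n -> s r < n.
Hypothesis Q_s : forall r, r < n -> r <> z -> Q (s r) = (Q r).+1.
Hypothesis z_lt : z < n.
Hypothesis Q_z : Q z = n.-1.
Hypothesis compat : rank_compatible n L s z.

Lemma suffix_order_from_ranks x y :
  x < y -> y < n -> lex_lt (drop (Q x) T) (drop (Q y) T).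
Proof.
suff: forall d x y, n - Q x <= d -> x < y -> y < n ->
    lex_lt (drop (Q x) T) (drop (Q y) T).
  by move=> by_length; apply: (by_length (n - Q x)).
elim=> [|d IH] {}x {}y len_x xy yn; have xn : x < n by lia.
  by have := Q_lt xn; lia.
rewrite (drop_nth false (n := Q x)) ?(drop_nth false (n := Q y)) ?T_size ?Q_lt //.
rewrite /= !T_Q //.
case: (compat xy yn) => [-> // | [-> next]]; rewrite ltnn eqxx /=.
have [xz | xz] := eqVneq x z.
  have yz : Q y <> n.-1 by move=> Qy; have := Q_inj yn z_lt; lia.
  rewrite xz Q_z drop_oversize ?T_size; last lia.
  by rewrite (drop_nth false) ?T_size //; have := Q_lt yn; lia.
case: next => [/eqP | [yz sxy]]; first by rewrite (negPf xz).
rewrite -Q_s //; last exact/eqP.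
rewrite -Q_s //; apply: IH => //; last exact: s_lt.
by rewrite Q_s //; [lia | exact/eqP].
Qed.

End SuffixOrderFromRanks.

(* The
   successor is increasing on [0, m) (no wrap-around since m + d <= n) and
   on [m, n) minus z (every such rank wraps around), and z is the least
   element of its block, so ties between letters are resolved correctly. *)
Lemma threshold_rank_compatible (n d m z : nat) :
  m + d <= n ->
  (z = m /\ n <= m.+1 + d) \/ (z = 0 /\ n <= m + d) ->
  rank_compatible n (fun r => m <= r) (fun r => (r + d) %% n) z.
Proof.
move=> md hz x y xy yn.
have low r : r < m -> (r + d) %% n = r + d by move=> rm; rewrite modn_small; lia.
have high r : m <= r -> r < n -> r <> z -> (r + d) %% n = r + d - n.
  move=> mr rn rz; rewrite -[in LHS](subnK (_ : n <= r + d)); last lia.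
  by rewrite modnDr modn_small; lia.
case: (leqP m x) => mx; case: (leqP m y) => my /=; try lia.
- right; split=> //; have [xz | xz] := eqVneq x z; [by left | right].
  by rewrite !high //; lia.
- right; split=> //; have [xz | xz] := eqVneq x z; [by left | right].
  by rewrite !low //; lia.
Qed.

Lemma mod_sum_cases (n a b : nat) :
  a < n -> b < n -> a + b = (a + b) %% n \/ a + b = (a + b) %% n + n.
Proof.
move=> a_lt b_lt; case: (ltnP (a + b) n) => [small | large]; first by left; rewrite modn_small.
right; rewrite -[in RHS](subnK large) modnDr modn_small; lia.
Qed.

(* Starting position (0-based) of the suffix of rank r when the suffix array
   is the arithmetic progression with ratio k starting at position c. *)
Definition ap_pos (n k c r : nat) : nat := (c + r * k) %% n.

Section ArithmeticPositions.

Variables (n k c : nat).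
Hypothesis n_gt1 : 1 < n.
Local Notation pos := (ap_pos n k c).
Hypothesis pos_inj : forall r1 r2, r1 < n -> r2 < n -> pos r1 = pos r2 -> r1 = r2.

Definition ap_rank (u : nat) : nat := index u (mkseq pos n).
Local Notation rank := ap_rank.

Lemma pos_lt r : pos r < n.
Proof. by rewrite ltn_pmod //; lia. Qed.

Lemma pos_perm : perm_eq (mkseq pos n) (iota 0 n).
Proof.
have uniq_pos : uniq (mkseq pos n).
  rewrite map_inj_in_uniq ?iota_uniq // => r1 r2; rewrite !mem_iota; apply: pos_inj; lia.
have pos_in : {subset mkseq pos n <= iota 0 n}.
  by move=> v /mapP[r _ ->]; rewrite mem_iota pos_lt.
have size_le : size (iota 0 n) <= size (mkseq pos n) by rewrite size_mkseq size_iota.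
have [_ same] := uniq_min_size uniq_pos pos_in size_le.
by rewrite uniq_perm ?iota_uniq.
Qed.

Lemma rankP u : u < n -> rank u < n /\ pos (rank u) = u.
Proof.
move=> un; have u_in : u \in mkseq pos n by rewrite (perm_mem pos_perm) mem_iota.
have rank_lt : rank u < n by rewrite -[X in _ < X](size_mkseq pos n) index_mem.
by split=> //; rewrite -[in RHS](nth_index 0 u_in) nth_mkseq.
Qed.

Lemma rank_pos r : r < n -> rank (pos r) = r.
Proof. by move=> rn; have [rank_lt pos_rank] := rankP (pos_lt r); apply: pos_inj. Qed.

(* The rank increment caused by moving one position to the right. *)
Definition ap_shift : nat := rank ((pos 0).+1 %% n).
Local Notation shift := ap_shift.

Lemma pos_shift r : pos ((r + shift) %% n) = (pos r).+1 %% n.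
Proof.
have [_ pos_shift] := rankP (ltn_pmod ((pos 0).+1) (ltnW n_gt1)).
move: pos_shift; rewrite -/shift /ap_pos mul0n addn0 => pos_shift.
rewrite -modnDmr modnMml modnDmr mulnDl addnCA -modnDmr pos_shift modnDmr.
rewrite addnS -[(_ + _).+1]addn1 -[((c + r * k) %% n).+1]addn1 modnDml.
by rewrite [r * k + _]addnC -addnA modnDml addnA.
Qed.

Let n1_lt : n.-1 < n. Proof. by rewrite prednK ?ltnSn // ltnW. Qed.

Local Notation succ r := ((r + shift) %% n).
Local Notation last_rank := (rank n.-1).

Lemma shift_bounds : 0 < shift < n.
Proof.
have [shift_lt pos_shift] := rankP (ltn_pmod ((pos 0).+1) (ltnW n_gt1)).
rewrite shift_lt andbT lt0n; apply/eqP => shift0; move: pos_shift.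
rewrite -/shift shift0; have := pos_lt 0.
case: (ltngtP (pos 0).+1 n) => [lt _ | // | full]; first by rewrite modn_small //; lia.
by rewrite full modnn; lia.
Qed.

Lemma pos_succ r : r < n -> r <> last_rank -> pos (succ r) = (pos r).+1.
Proof.
move=> rn r_last; rewrite pos_shift modn_small //.
suff : pos r <> n.-1 by have := pos_lt r; lia.
by move=> pos_r; apply: r_last; rewrite -pos_r rank_pos.
Qed.

Lemma succ_last : succ last_rank = rank 0.
Proof.
have [_ pos_last] := rankP n1_lt.
rewrite -(@rank_pos (succ last_rank)); last by rewrite ltn_pmod // ltnW.
by congr rank; rewrite pos_shift pos_last prednK ?modnn // ltnW.
Qed.

Lemma threshold_suffix_array m :
  rank_compatible n (fun r => m <= r) (fun r => succ r) last_rank ->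
  is_suffix_array (mkseq (fun u => m <= rank u) n) (mkseq (fun r => (pos r).+1) n).
Proof.
move=> compat; rewrite /is_suffix_array !size_mkseq; split.
  have -> : mkseq (fun r => (pos r).+1) n = map (addn 1) (mkseq pos n).
    by rewrite -map_comp; apply: eq_map => r; rewrite /= add1n.
  by rewrite -[1]addn0 iotaDl perm_map // pos_perm.
move=> i i_lt; rewrite /suffix !nth_mkseq //=; last lia.
have [last_lt pos_last] := rankP n1_lt.
apply: (@suffix_order_from_ranks n last_rank _ pos (fun r => succ r) (fun r => m <= r)) => //; try lia.
- by rewrite size_mkseq.
- by move=> r _; apply: pos_lt.
- by move=> r rn; rewrite nth_mkseq ?pos_lt // rank_pos.
- exact: pos_succ.
Qed.

Lemma threshold_exists : c \in [:: 0; k; n.-1] ->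
  exists m, m + shift <= n /\
    ((last_rank = m /\ n <= m.+1 + shift) \/ (last_rank = 0 /\ n <= m + shift)).
Proof.
have [shift_gt0 shift_lt] := andP shift_bounds.
have [last_lt _] := rankP n1_lt.
have rank_of r u : r < n -> pos r = u -> rank u = r by move=> r_lt <-; apply: rank_pos.
have wrap := mod_sum_cases last_lt shift_lt; rewrite succ_last in wrap.
rewrite !inE => /or3P[] /eqP c_eq.
-
  have rank0 : rank 0 = 0.
    by apply: rank_of; [exact: ltnW | rewrite /ap_pos c_eq mul0n mod0n].
  by rewrite rank0 in wrap; exists last_rank; lia.
- (* c = k: position n - 1 has rank 0, hence rank 0 = n - 1 *)
  have pos_last : pos n.-1 = 0 by rewrite /ap_pos c_eq -mulSn prednK ?modnMr // ltnW.
  by rewrite (rank_of _ _ n1_lt pos_last) in wrap; exists last_rank; lia.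
-
  have last0 : last_rank = 0.
    by apply: rank_of; [exact: ltnW | rewrite /ap_pos c_eq mul0n addn0 modn_small].
  by exists (n - shift); lia.
Qed.

End ArithmeticPositions.

Lemma ap_perm_positions (n k : nat) (P : seq nat) :
  0 < n -> ap_perm n k P ->
  P = mkseq (fun r => (ap_pos n k (nth 0 P 0).-1 r).+1) n.
Proof.
move=> n_gt0 [size_P perm_P _ step].
have p1_in : nth 0 P 0 \in iota 1 n by rewrite -(perm_mem perm_P) mem_nth // size_P.
rewrite mem_iota in p1_in; set c := (nth 0 P 0).-1.
apply: (@eq_from_nth _ 0) => [|r]; first by rewrite size_mkseq.
rewrite size_P => r_lt.
rewrite nth_mkseq //; elim: r r_lt => [|r IH] r_lt.
  by rewrite /ap_pos mul0n addn0 modn_small /c; lia.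
rewrite step // IH; last lia.
rewrite /modn1 /ap_pos; congr S.
have -> : ((c + r * k) %% n).+1 + k + n - 1 = (c + r * k) %% n + k + n by lia.
by rewrite modnDr modnDml mulSn; congr modn; lia.
Qed.

Lemma ap_pos_inj (n k : nat) (P : seq nat) :
  0 < n -> ap_perm n k P ->
  forall r1 r2, r1 < n -> r2 < n ->
    ap_pos n k (nth 0 P 0).-1 r1 = ap_pos n k (nth 0 P 0).-1 r2 -> r1 = r2.
Proof.
move=> n_gt0 apP r1 r2 r1_lt r2_lt same_pos; have [size_P perm_P _ _] := apP.
have uniq_P : uniq P by rewrite (perm_uniq perm_P) iota_uniq.
apply/eqP; rewrite -(nth_uniq 0 _ _ uniq_P) ?size_P //.
by rewrite (ap_perm_positions n_gt0 apP) !nth_mkseq // same_pos.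
Qed.

Theorem theorem9 (n k : nat) (P : seq nat) :
  2 <= n ->
  ap_perm n k P ->
  P <> rev (iota 1 n) ->
  nth 0 P 0 \in [:: 1; k.+1; n] ->
  exists T : seq bool, size T = n /\ is_suffix_array T P.
Proof.
move=> n_ge2 apP _ p1_cases; have n_gt0 : 0 < n by lia.
have P_eq := ap_perm_positions n_gt0 apP.
have pos_inj := ap_pos_inj n_gt0 apP.
set c := (nth 0 P 0).-1 in P_eq pos_inj.
have c_cases : c \in [:: 0; k; n.-1].
  by move: p1_cases; rewrite !inE /c => /or3P[] /eqP ->; rewrite eqxx ?orbT.
have [m [m_shift last_block]] := threshold_exists n_ge2 pos_inj c_cases.
exists (mkseq (fun u => m <= ap_rank n k c u) n); rewrite size_mkseq; split=> //.
by rewrite P_eq; apply: threshold_suffix_array => //; apply: threshold_rank_compatible.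
Qed.
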